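(* Let $a_1,\ldots,a_k\in[n]$, $N=a_1+\cdots+a_k$, let $j\in[\max(a_1,\ldots,a_k),\min(N,n)]$ and let $t$ be any term of $B_j$. Let $D_{j,t}$ be the set of $k$-tuples $(\sigma_1,\ldots,\sigma_k)$, with $\sigma_i$ a term of $B_{a_i}$, such that the set of cards hit by the tuple is exactly $\{1,\ldots,j\}$ and $\sigma_1\sigma_2\cdots\sigma_k=t$ in $S_n$. Define $\phi_j(\sigma_1,\ldots,\sigma_k)=\{\alpha_1,\ldots,\alpha_j\}$ where $\alpha_c=\{l\in[N]:\text{the $l$-th hitter hits card } c\}$. Then $\phi_j$ is a well-defined bijection from $D_{j,t}$ onto $Q_j^{a_1,\ldots,a_k}$.
   Context: Elements of $S_n$ are written in deck notation: a word $c_1c_2\cdots c_n$ (a rearrangement of $1,\ldots,n$) is the deck in which card $c_i$ lies in position $i$; the identity is $12\cdots n$. Multiplication: for $\sigma=c_1\cdots c_n$ and $\tau=d_1\cdots d_n$, $\sigma\tau=c_{d_1}c_{d_2}\cdots c_{d_n}$ (first $\sigma$, then $\tau$ is applied to the deck). For $a\in[n]$, a term of $B_a$ is a word $c_1\cdots c_n\in S_n$ in which the letters $a+1,\ldots,n$ appear in increasing order; $B_a\in\mathbb{Q}[S_n]$ is the sum of all terms of $B_a$. Let $A_i=a_1+\cdots+a_i$ ($A_0=0$) and $I_i=\{A_{i-1}+1,\ldots,A_i\}$. Hitting: given a tuple $(\sigma_1,\ldots,\sigma_k)$ with $\sigma_i$ a term of $B_{a_i}$, let $d^{(0)}=12\cdots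 n$ and $d^{(i)}=\sigma_1\cdots\sigma_i$ (the deck after $i$ shuffles). For $l=A_{i-1}+m$ with $1\le m\le a_i$, the $l$-th hitter hits the card lying in position $m$ of $d^{(i-1)}$. The cards hit by the tuple are those hit by some hitter. $Q_j^{a_1,\ldots,a_k}$ is the set of all partitions of $[N]$ into exactly $j$ nonempty blocks such that no block contains two distinct elements of the same segment $I_i$. *)

From mathcomp Require Import all_boot all_order all_fingroup.
Set Implicit Arguments. Unset Strict Implicit. Unset Printing Implicit Defensive.

(* Conventions (0-based encoding): card c (1..n) of the paper is the ordinal
   c-1 : 'I_n, and position p (1..n) is the ordinal p-1 : 'I_n.
   A deck  c_1...c_n  is the permutation s : {perm 'I_n} with s (p-1) = c_p - 1
   (position |-> card).  Hitters l = 1..N are encoded as l-1 : 'I_N. *)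

(* Paper product  sigma tau  (first sigma, then tau):  (sigma tau)(p) = sigma(tau(p)).
   In MathComp (s * t) x = t (s x), hence sigma tau = tau * sigma. *)
Definition deck_mul n (sigma tau : {perm 'I_n}) : {perm 'I_n} := (tau * sigma)%g.

(* sigma is a term of B_a : letters a+1..n appear in increasing order,
   i.e. for cards x < y among a+1..n, position of x < position of y. *)
Definition isB n (a : nat) (sigma : {perm 'I_n}) : bool :=
  [forall x : 'I_n, forall y : 'I_n,
     (a <= x) && (x < y) ==> ((sigma^-1)%g x < (sigma^-1)%g y)].

Definition segA (a : seq nat) (i : nat) : nat := sumn (take i a).

(* 0-based index of the segment I_{i+1} containing the 0-based hitter l *)
Definition seg (a : seq nat) (l : nat) : nat :=
  count (fun i => segA a i.+1 <= l) (iota 0 (size a)).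

(* 0-based position m-1 for hitter l = A_{i-1} + m *)
Definition offset (a : seq nat) (l : nat) : nat := l - segA a (seg a l).

Definition deck_after n (s : seq {perm 'I_n}) (i : nat) : {perm 'I_n} :=
  foldr (@deck_mul n) 1%g (take i s).

Definition hit_card n (a : seq nat) (s : seq {perm 'I_n}) (l : nat) : option 'I_n :=
  omap (fun p : 'I_n => deck_after s (seg a l) p) (insub (offset a l)).

Section Hitting.
Variables (n : nat) (a : seq nat).
Local Notation k := (size a).
Local Notation N := (sumn a).

Definition tuple_seq (s : {ffun 'I_k -> {perm 'I_n}}) : seq {perm 'I_n} := fgraph s.

Definition hits (s : {ffun 'I_k -> {perm 'I_n}}) (l : 'I_N) (c : 'I_n) : bool :=
  hit_card a (tuple_seq s) l == Some c.

Definition cards_hit (s : {ffun 'I_k -> {perm 'I_n}}) : {set 'I_n} :=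
  [set c | [exists l : 'I_N, hits s l c]].

Definition alpha (s : {ffun 'I_k -> {perm 'I_n}}) (c : 'I_n) : {set 'I_N} :=
  [set l | hits s l c].

Definition Dset (j : nat) (t : {perm 'I_n}) : {set {ffun 'I_k -> {perm 'I_n}}} :=
  [set s : {ffun 'I_k -> {perm 'I_n}} | [&& [forall i : 'I_k, isB (nth 0 a i) (s i)],
              cards_hit s == [set c : 'I_n | c < j] &
              deck_after (tuple_seq s) k == t]].

Definition phi (j : nat) (s : {ffun 'I_k -> {perm 'I_n}}) : {set {set 'I_N}} :=
  [set alpha s c | c in [set c : 'I_n | c < j]].

Definition Qset (j : nat) : {set {set {set 'I_N}}} :=
  [set P : {set {set 'I_N}} |
     [&& partition P [set: 'I_N], #|P| == j &
         [forall B in P, forall x in B, forall y in B,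
            (seg a x == seg a y) ==> (x == y)]]].

End Hitting.

Arguments phi n a j s : clear implicits.
Arguments Dset n a j t : clear implicits.
Arguments Qset a j : clear implicits.

(* Give card c at time b the key "first hitter l >= b that hits c", or N plus the
   position of c in t when no such hitter exists.  For a tuple in D_{j,t} the deck
   after i shuffles lists the cards by increasing key at time A_i: this holds for the
   final deck t, and it propagates backwards through sigma_i because the top a_i cards
   of d^(i-1) are exactly the cards hit by the hitters of I_i, in that order, while the
   B_{a_i} condition preserves the relative order of all other cards.  At time 0 the
   deck is the identity, so card c < j is hit by the c-th block of phi in the order of
   least elements; hence phi determines the hitting pattern, then every key, every deck
   and every sigma_i.  Conversely, label the blocks of a partition in Q_j by increasing
   least element, take for the i-th deck the permutation sorting cards by key at time
   A_i, and read the sigma_i off consecutive decks; t in B_j makes the deck at time 0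
   the identity. *)

From mathcomp Require Import all_boot all_order all_fingroup.
From mathcomp Require Import zify.
Set Implicit Arguments. Unset Strict Implicit. Unset Printing Implicit Defensive.

Lemma card_ltn_ord n m : m <= n -> #|[set p : 'I_n | p < m]| = m.
Proof.
elim: m => [|m IHm] ltmn.
  by apply/eqP; rewrite cards_eq0; apply/eqP/setP=> p; rewrite !inE.
rewrite (_ : [set p : 'I_n | p < m.+1] = Ordinal ltmn |: [set p : 'I_n | p < m]).
  by rewrite cardsU1 IHm ?(ltnW ltmn) // inE ltnn.
by apply/setP=> p; rewrite !inE ltnS leq_eqVlt.
Qed.

Section Rank.
Variable T : finType.
Implicit Types (A : {set T}) (K : T -> nat).

Definition rank_in A K x := #|[set y in A | K y < K x]|.

Lemma ltn_rank_in A K : {in A &, forall x y, (rank_in A K x < rank_in A K y) = (K x < K y)}.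
Proof.
move=> x y xA yA; case: (ltnP (K x) (K y)) => [ltK | leK].
  apply: proper_card; apply/properP; split; last by exists x; rewrite !inE ?xA ?ltnn.
  by apply/subsetP=> z; rewrite !inE => /andP[-> /ltn_trans->].
apply/negbTE; rewrite -leqNgt; apply: subset_leq_card.
by apply/subsetP=> z; rewrite !inE => /andP[-> /leq_trans->].
Qed.

Lemma rank_in_lt A K x : x \in A -> rank_in A K x < #|A|.
Proof.
move=> xA; apply: proper_card; apply/properP; split; last by exists x; rewrite ?inE ?ltnn ?andbF.
by apply/subsetP=> y; rewrite inE => /andP[].
Qed.

Lemma rank_in_inj A K : {in A &, injective K} -> {in A &, injective (rank_in A K)}.
Proof.
move=> injK x y xA yA eq_rank; apply: injK => //.
have := ltn_rank_in K xA yA; have := ltn_rank_in K yA xA; rewrite eq_rank ltnn.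
by case: (ltngtP (K x) (K y)).
Qed.

Lemma rank_in_onto A K m : {in A &, injective K} -> m < #|A| ->
  exists2 x, x \in A & rank_in A K x = m.
Proof.
move=> injK ltm; pose ranks := [seq rank_in A K x | x in A].
have uniq_ranks : uniq ranks.
  by rewrite map_inj_in_uniq ?enum_uniq // => x y; rewrite !mem_enum; apply: rank_in_inj.
have ranks_sub : {subset ranks <= iota 0 #|A|}.
  by move=> r /mapP[x]; rewrite mem_enum => xA ->; rewrite mem_iota rank_in_lt.
have [_ eq_ranks] : (size ranks = size (iota 0 #|A|)) * (ranks =i iota 0 #|A|).
  by apply: uniq_min_size; rewrite // size_iota size_image.
have /mapP[x] : m \in ranks by rewrite eq_ranks mem_iota.
by rewrite mem_enum => xA em; exists x.
Qed.

End Rank.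

Section PermOrders.
Variable n : nat.
Implicit Types (pi : {perm 'I_n}) (K : 'I_n -> nat).

Definition perm_orders pi K := forall c c', (pi c < pi c') = (K c < K c').

Lemma perm_orders_rank pi K c : perm_orders pi K -> val (pi c) = rank_in setT K c.
Proof.
move=> piK; have -> : rank_in setT K c = #|[set c' | pi c' < pi c]|.
  by apply: eq_card => c'; rewrite !inE piK.
rewrite -[LHS](card_ltn_ord (ltnW (ltn_ord (pi c)))) -(card_imset _ (@perm_inj _ pi)).
apply: eq_card => p; rewrite inE; apply/idP/imsetP=> [ltp|[x]]; last by rewrite inE => ? ->.
by exists ((pi^-1)%g p); rewrite ?inE permKV.
Qed.

Lemma perm_orders_uniq pi pi' K : perm_orders pi K -> perm_orders pi' K -> pi = pi'.
Proof.
move=> piK pi'K; apply/permP=> c; apply: val_inj.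
by rewrite (perm_orders_rank _ piK) (perm_orders_rank _ pi'K).
Qed.

Lemma perm_orders_exists K : injective K -> {rho : {perm 'I_n} | perm_orders rho K}.
Proof.
move=> injK; have ltn_rank c : rank_in setT K c < n.
  by rewrite -[n in _ < n]card_ord -cardsT rank_in_lt ?inE.
have inj_rank : injective (fun c => Ordinal (ltn_rank c)).
  move=> c c' /(congr1 val) /=; apply: rank_in_inj; rewrite ?inE //.
  by move=> x y _ _; apply: injK.
by exists (perm inj_rank) => c c'; rewrite !permE /= ltn_rank_in ?inE.
Qed.

End PermOrders.

Section First.
Variable N : nat.
Implicit Types (p q : pred nat).

(* The least l in [b, N) with p l, or N when there is none (for b <= N). *)
Definition first p b := b + find (fun x => p (b + x)) (iota 0 (N - b)).

Lemma first_ge p b : b <= first p b.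
Proof. exact: leq_addr. Qed.

Lemma first_leN p b : b <= N -> first p b <= N.
Proof.
move=> leb; have := find_size (fun x => p (b + x)) (iota 0 (N - b)).
by rewrite size_iota /first; lia.
Qed.

Lemma first_none p b l : b <= l -> l < first p b -> ~~ p l.
Proof.
move=> lebl ltl; rewrite -(subnKC lebl).
have ltfind : l - b < find (fun x => p (b + x)) (iota 0 (N - b)) by rewrite ltn_subLR.
have ltsize : l - b < N - b.
  by apply: leq_trans ltfind _; rewrite -[X in _ <= X](size_iota 0 (N - b)) find_size.
by have := before_find 0 ltfind; rewrite nth_iota // add0n => ->.
Qed.

Lemma first_hit p b : first p b < N -> p (first p b).
Proof.
rewrite /first => ltN.
have : has (fun x => p (b + x)) (iota 0 (N - b)) by rewrite has_find size_iota; lia.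
by move/(nth_find 0); rewrite nth_iota ?add0n //; lia.
Qed.

Lemma first_le p b l : b <= l -> l < N -> p l -> first p b <= l.
Proof. by move=> lebl _ pl; rewrite leqNgt; apply: contraL pl; apply: first_none. Qed.

Lemma first_eq p b l : b <= l -> l <= N -> (l < N -> p l) ->
  (forall l', b <= l' < l -> ~~ p l') -> first p b = l.
Proof.
move=> lebl leN pl none; apply/eqP; rewrite eqn_leq; apply/andP; split.
  case: ltnP (pl) => [ltN /(_ isT) | geN _]; first exact: first_le.
  by apply: leq_trans (first_leN _ (leq_trans lebl leN)) geN.
rewrite leqNgt; apply/negP=> ltfirst.
have := none (first p b); rewrite first_ge ltfirst first_hit; first by move/(_ isT).
exact: leq_trans ltfirst leN.
Qed.

Lemma first_shift p b b' : b <= b' -> b' <= N -> (forall l, b <= l < b' -> ~~ p l) ->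
  first p b = first p b'.
Proof.
move=> lebb' leb'N none; apply: first_eq.
- exact: leq_trans (first_ge _ _).
- exact: first_leN.
- exact: first_hit.
move=> l /andP[lebl ltl]; case: (ltnP l b') => [ltlb' | geb'l]; first by rewrite none ?lebl.
exact: first_none ltl.
Qed.

Lemma first_ext p q b : (forall l, b <= l < N -> p l = q l) -> first p b = first q b.
Proof.
move=> epq; congr (_ + _); apply: eq_in_find => x.
by rewrite mem_iota add0n => ltx; apply: epq; rewrite leq_addr /=; lia.
Qed.

End First.

Lemma partitionT_imset (I T : finType) (J : {set I}) (F : I -> {set T}) :
  {in J, forall i, F i != set0} ->
  {in J &, forall i i', i != i' -> [disjoint F i & F i']} ->
  (forall x, exists2 i, i \in J & x \in F i) ->
  partition (F @: J) [set: T] /\ #|F @: J| = #|J|.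
Proof.
move=> F_neq0 F_disj F_cover; split.
  apply/and3P; split.
  - apply/eqP/setP=> x; rewrite inE; apply/bigcupP.
    by have [i iJ xF] := F_cover x; exists (F i); rewrite ?imset_f.
  - apply/trivIsetP=> _ _ /imsetP[i iJ ->] /imsetP[i' i'J ->] neqF.
    by apply: F_disj => //; apply: contraNneq neqF => ->.
  - by apply/imsetP=> -[i iJ eF]; have := F_neq0 i iJ; rewrite -eF eqxx.
rewrite card_in_imset // => i i' iJ i'J eF; apply/eqP; apply: contraT => neqi.
by have := F_disj i i' iJ i'J neqi; rewrite eF -setI_eq0 setIid (negbTE (F_neq0 i' i'J)).
Qed.

Section Blocks.
Variable N : nat.

Definition least (B : {set 'I_N}) := first N (fun l => [exists x in B, val x == l]) 0.

Lemma least_mem B : B != set0 -> exists2 x, x \in B & val x = least B.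
Proof.
case/set0Pn=> x0 x0B.
have ltN : least B < N.
  apply: leq_ltn_trans (ltn_ord x0); apply: first_le => //.
  by apply/existsP; exists x0; rewrite x0B /=.
by have /existsP[x /andP[xB /eqP ex]] := first_hit ltN; exists x.
Qed.

Variables (P : {set {set 'I_N}}) (D : {set 'I_N}).
Hypothesis partP : partition P D.

Lemma least_inj : {in P &, injective least}.
Proof.
move=> B B' BP B'P eq_least.
have [x xB ex] := least_mem (partition_neq0 partP BP).
have [x' x'B ex'] := least_mem (partition_neq0 partP B'P).
have exx' : x = x' by apply: val_inj; rewrite ex ex' eq_least.
have trivP := partition_trivIset partP.
by rewrite -(def_pblock trivP BP xB) -(def_pblock trivP B'P x'B) exx'.
Qed.

Definition block (c : nat) : {set 'I_N} := odflt set0 [pick B in P | rank_in P least B == c].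

Lemma block_rank B : B \in P -> block (rank_in P least B) = B.
Proof.
move=> BP; rewrite /block; case: pickP => [B' /andP[B'P /eqP eq_rank] | /(_ B)].
  exact: (rank_in_inj least_inj B'P BP eq_rank).
by rewrite BP eqxx.
Qed.

Lemma block_mem c : c < #|P| -> block c \in P /\ rank_in P least (block c) = c.
Proof.
by move=> ltc; have [B BP <-] := rank_in_onto least_inj ltc; rewrite block_rank.
Qed.

Lemma block_out c : #|P| <= c -> block c = set0.
Proof.
move=> lec; rewrite /block; case: pickP => [B /andP[BP /eqP eq_rank] | //].
by move: (rank_in_lt least BP); rewrite eq_rank ltnNge lec.
Qed.

End Blocks.

Arguments least {N} B.

Section Segments.
Variable a : seq nat.
Local Notation k := (size a).
Local Notation N := (sumn a).

Lemma segA0 : segA a 0 = 0.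
Proof. by rewrite /segA take0. Qed.

Lemma segA_size : segA a k = N.
Proof. by rewrite /segA take_size. Qed.

Lemma segAS i : i < k -> segA a i.+1 = segA a i + nth 0 a i.
Proof. by move=> ltik; rewrite /segA (take_nth 0 ltik) sumn_rcons. Qed.

Lemma segA_mono : {homo segA a : i i' / i <= i'}.
Proof.
move=> i i' leii'; rewrite /segA -(subnKC leii') takeD sumn_cat.
exact: leq_addr.
Qed.

Lemma segA_le_sumn i : segA a i <= N.
Proof. by rewrite /segA -{2}(cat_take_drop i a) sumn_cat leq_addr. Qed.

Lemma segA_add_ltS i m : i < k -> m < nth 0 a i -> segA a i + m < segA a i.+1.
Proof. by move=> ltik ltm; rewrite segAS // ltn_add2l. Qed.

Lemma segA_add_lt i m : i < k -> m < nth 0 a i -> segA a i + m < N.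
Proof. by move=> ltik ltm; apply: leq_trans (segA_add_ltS ltik ltm) (segA_le_sumn _). Qed.

Lemma seg_eq i l : i < k -> segA a i <= l < segA a i.+1 -> seg a l = i.
Proof.
move=> ltik /andP[lel ltl]; rewrite /seg -(subnKC (ltnW ltik)) iotaD count_cat.
rewrite (@eq_in_count _ _ predT) ?count_predT ?size_iota; last first.
  by move=> i'; rewrite mem_iota => /andP[_ lti']; apply: leq_trans lel; apply: segA_mono.
rewrite (@eq_in_count _ _ pred0) ?count_pred0 ?addn0 // => i'.
rewrite mem_iota /= => /andP[lei' _]; apply/negbTE; rewrite -ltnNge.
by apply: leq_trans ltl _; apply: segA_mono.
Qed.

Lemma seg_bounds l : l < N -> seg a l < k /\ segA a (seg a l) <= l < segA a (seg a l).+1.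
Proof.
move=> ltlN; pose i := find (fun i => l < segA a i.+1) (iota 0 k).
have hasi : has (fun i => l < segA a i.+1) (iota 0 k).
  have k_gt0 : 0 < k by case: (a) ltlN.
  apply/hasP; exists k.-1; first by rewrite mem_iota add0n prednK ?leqnn.
  by rewrite prednK // segA_size.
have ltik : i < k by move: hasi; rewrite has_find size_iota.
have ltl : l < segA a i.+1 by have := nth_find 0 hasi; rewrite nth_iota.
have lel : segA a i <= l.
  case ei : i => [|i']; first by rewrite segA0.
  have lti' : i' < i by rewrite ei.
  have := before_find 0 lti'; rewrite nth_iota ?add0n ?(ltn_trans lti') //.
  by move/negbT; rewrite -leqNgt.
by rewrite (@seg_eq i) ?lel.
Qed.

Lemma seg_add i m : i < k -> m < nth 0 a i -> seg a (segA a i + m) = i.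
Proof. by move=> ltik ltm; apply: seg_eq => //; rewrite leq_addr segA_add_ltS. Qed.

Lemma offset_add i m : i < k -> m < nth 0 a i -> offset a (segA a i + m) = m.
Proof. by move=> ltik ltm; rewrite /offset seg_add // addKn. Qed.

Lemma offset_lt l : l < N -> offset a l < nth 0 a (seg a l).
Proof.
by move=> ltlN; have [ltk /andP[lel ltl]] := seg_bounds ltlN; rewrite /offset ltn_subLR // -segAS.
Qed.

Lemma seg_offset_inj l l' : l < N -> l' < N -> seg a l = seg a l' ->
  offset a l = offset a l' -> l = l'.
Proof.
move=> ltlN ltl'N eseg; rewrite /offset => eoff.
have [_ /andP[lel _]] := seg_bounds ltlN; have [_ /andP[lel' _]] := seg_bounds ltl'N.
by rewrite -(subnK lel) -(subnK lel') eoff eseg.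
Qed.

End Segments.

Section Decks.
Variable n : nat.
Implicit Types (s : seq {perm 'I_n}).

Lemma deck_after0 s : deck_after s 0 = 1%g.
Proof. by rewrite /deck_after take0. Qed.

Lemma deck_afterS s i : i < size s -> deck_after s i.+1 = (nth 1%g s i * deck_after s i)%g.
Proof.
move=> ltis; rewrite /deck_after (take_nth 1%g ltis).
by elim: (take i s) => [|x s' IHs] /=; rewrite /deck_mul ?mulg1 ?mul1g // IHs mulgA.
Qed.

Lemma hit_card_at a s l (p : 'I_n) : val p = offset a l ->
  hit_card a s l = Some (deck_after s (seg a l) p).
Proof. by move=> ep; rewrite /hit_card -ep valK. Qed.

Lemma isB_mono m sigma (x y : 'I_n) : isB m sigma -> m <= x -> m <= y ->
  ((sigma^-1)%g x < (sigma^-1)%g y) = (x < y).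
Proof.
move=> /forallP sigmaB lemx lemy; case: (ltngtP (val x) (val y)) => [ltxy|ltyx|/val_inj-> //].
- by have := forallP (sigmaB x) y; rewrite lemx ltxy /= => ->.
- have := forallP (sigmaB y) x; rewrite lemy ltyx /= => ltyx'.
  by apply/negbTE; rewrite -leqNgt ltnW.
- by rewrite ltnn.
Qed.

Variable a : seq nat.
Local Notation k := (size a).
Implicit Types (u : {ffun 'I_k -> {perm 'I_n}}).

Lemma size_tuple_seq u : size (tuple_seq u) = k.
Proof. by rewrite /tuple_seq size_tuple card_ord. Qed.

Lemma nth_tuple_seq u (i : 'I_k) : nth 1%g (tuple_seq u) i = u i.
Proof. exact: nth_fgraph_ord. Qed.

Lemma deck_after_tuple_seqS u (i : 'I_k) :
  deck_after (tuple_seq u) i.+1 = (u i * deck_after (tuple_seq u) i)%g.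
Proof. by rewrite deck_afterS ?size_tuple_seq // nth_tuple_seq. Qed.

End Decks.

Section Hitting.
Variables (n : nat) (a : seq nat).
Local Notation k := (size a).
Local Notation N := (sumn a).
Local Notation A := (segA a).

Definition hitting (hit : nat -> 'I_n -> bool) : Prop :=
  [/\ forall l, l < N -> exists c, hit l c,
      forall l c c', hit l c -> hit l c' -> c = c' &
      forall l l' c, l < N -> l' < N -> seg a l = seg a l' -> hit l c -> hit l' c -> l = l'].

Hypothesis a_le_n : forall x, x \in a -> x <= n.
Variables (final_pos : 'I_n -> nat) (hit : nat -> 'I_n -> bool).
Hypothesis hitP : hitting hit.

Definition key b c := if first N (hit^~ c) b < N then first N (hit^~ c) b else N + final_pos c.

Lemma key_ge b c : b <= N -> b <= key b c.
Proof.
move=> lebN; rewrite /key; case: ifP => _; first exact: first_ge.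
exact: leq_trans (leq_addr _ _).
Qed.

Lemma key_sumn c : key N c = N + final_pos c.
Proof. by rewrite /key /first subnn addn0 ltnn. Qed.

Lemma key_nohit b c : b <= N -> (forall l, b <= l < N -> ~~ hit l c) -> key b c = N + final_pos c.
Proof.
move=> lebN none; rewrite /key; case: ifP => // ltN.
by have /negP[] := none _ (introT andP (conj (first_ge _ _ _) ltN)); apply: (first_hit ltN).
Qed.

Lemma key0_least c : [set l : 'I_N | hit l c] != set0 -> key 0 c = least [set l : 'I_N | hit l c].
Proof.
case/set0Pn=> l; rewrite inE => hitc.
have ltN : first N (hit^~ c) 0 < N by apply: leq_ltn_trans (ltn_ord l); apply: first_le hitc.
rewrite /key ltN; apply: first_ext => l' /andP[_ ltl'N]; apply/idP/existsP.
  by exists (Ordinal ltl'N); rewrite inE eqxx andbT.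
by case=> x /andP[]; rewrite inE => hitx /eqP <-.
Qed.

Lemma key_hit i m c : i < k -> m < nth 0 a i -> hit (A i + m) c -> key (A i) c = A i + m.
Proof.
case: hitP => _ _ hit_seg ltik ltm hitc; have ltN := segA_add_lt ltik ltm.
rewrite /key (@first_eq _ _ _ (A i + m)) ?ltN ?leq_addr ?(ltnW ltN) // => l /andP[lel ltl].
apply/negP=> hitl; have ltlN := ltn_trans ltl ltN.
have eseg : seg a l = seg a (A i + m).
  by rewrite seg_add // (@seg_eq _ i) // lel (ltn_trans ltl (segA_add_ltS ltik ltm)).
by move: ltl; rewrite (hit_seg _ _ _ ltlN ltN eseg hitl hitc) ltnn.
Qed.

Lemma key_skip i c : i < k -> (forall m, m < nth 0 a i -> ~~ hit (A i + m) c) ->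
  key (A i) c = key (A i.+1) c.
Proof.
move=> ltik none; rewrite /key (@first_shift _ _ _ (A i.+1)) ?segA_le_sumn //.
  by rewrite segA_mono.
move=> l /andP[lel ltl]; rewrite -(subnKC lel); apply: none.
by rewrite ltn_subLR // -segAS.
Qed.

Lemma key_lt_segA i c : i < k -> key (A i) c < A i.+1 ->
  exists2 m, m < nth 0 a i & hit (A i + m) c /\ key (A i) c = A i + m.
Proof.
move=> ltik; rewrite /key; case: ifP => [ltN ltA | _]; last first.
  by move/leq_trans/(_ (segA_le_sumn a i.+1)); rewrite ltnNge leq_addr.
exists (first N (hit^~ c) (A i) - A i); first by rewrite ltn_subLR ?first_ge // -segAS.
by rewrite subnKC ?first_ge //; split => //; exact: (first_hit ltN).
Qed.

Lemma nth_le_n i : i < k -> nth 0 a i <= n.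
Proof. by move=> ltik; apply/a_le_n/mem_nth. Qed.

Lemma perm_orders_key_pred i (pi pi' : {perm 'I_n}) : i < k ->
  perm_orders pi' (key (A i.+1)) ->
  (forall c, pi c < nth 0 a i -> hit (A i + pi c) c) ->
  (forall c c', nth 0 a i <= pi c -> nth 0 a i <= pi c' -> (pi c < pi c') = (pi' c < pi' c')) ->
  perm_orders pi (key (A i)).
Proof.
case: hitP => _ hit_fun _ ltik pi'K hit_top keep_tail.
have key_top c : pi c < nth 0 a i -> key (A i) c = A i + pi c.
  by move=> ltc; apply: key_hit => //; apply: hit_top.
have key_tail c : nth 0 a i <= pi c -> key (A i) c = key (A i.+1) c.
  move=> lec; apply: key_skip => // m ltm; apply/negP => hitc.
  have ltmn : m < n := leq_trans ltm (nth_le_n ltik).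
  have pi_c0 : pi ((pi^-1)%g (Ordinal ltmn)) = Ordinal ltmn by rewrite permKV.
  have := hit_top ((pi^-1)%g (Ordinal ltmn)); rewrite pi_c0 => /(_ ltm) hitc0.
  by move: lec; rewrite (hit_fun _ _ _ hitc hitc0) pi_c0 leqNgt ltm.
have segA_le_key c : nth 0 a i <= pi c -> A i.+1 <= key (A i) c.
  by move=> lec; rewrite key_tail // key_ge // segA_le_sumn.
move=> c c'; case: (ltnP (pi c) (nth 0 a i)) => ltc; case: (ltnP (pi c') (nth 0 a i)) => ltc'.
- by rewrite !key_top // ltn_add2l.
- rewrite (leq_trans ltc ltc') key_top //.
  by rewrite (leq_trans (segA_add_ltS ltik ltc) (segA_le_key _ ltc')).
- rewrite ltnNge (ltnW (leq_trans ltc' ltc)) (key_top c') // ltnNge.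
  by rewrite (ltnW (leq_trans (segA_add_ltS ltik ltc') (segA_le_key _ ltc))).
- by rewrite keep_tail // pi'K !key_tail.
Qed.

Lemma key_position i (pi : {perm 'I_n}) : i < k -> perm_orders pi (key (A i)) ->
  forall m c, m < nth 0 a i -> hit (A i + m) c -> val (pi c) = m.
Proof.
case: hitP => hit_total _ _ ltik piK m; elim/ltn_ind: m => m IHm c ltm hitc.
have keyc := key_hit ltik ltm hitc; have ltmn := leq_trans ltm (nth_le_n ltik).
apply/eqP; rewrite eqn_leq; apply/andP; split.
  rewrite leqNgt; apply/negP=> ltmpi; pose c1 := ((pi^-1)%g (Ordinal ltmn)).
  have pi_c1 : pi c1 = Ordinal ltmn by rewrite permKV.
  have : pi c1 < pi c by rewrite pi_c1.
  rewrite piK keyc => ltkey.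
  have [m1 ltm1 [hitc1 keyc1]] := key_lt_segA ltik (ltn_trans ltkey (segA_add_ltS ltik ltm)).
  have ltm1m : m1 < m by rewrite keyc1 ltn_add2l in ltkey.
  by move: (ltm1m); rewrite -(IHm m1 ltm1m c1 ltm1 hitc1) pi_c1 ltnn.
case: m IHm ltm hitc keyc ltmn => [|m] IHm ltm hitc keyc ltmn //.
have ltm' : m < nth 0 a i := ltnW ltm.
have [c2 hitc2] := hit_total _ (segA_add_lt ltik ltm').
have : key (A i) c2 < key (A i) c by rewrite keyc (key_hit ltik ltm' hitc2) ltn_add2l.
by rewrite -piK (IHm m (ltnSn m) c2 ltm' hitc2).
Qed.

Lemma perm_orders_key_hit i (pi : {perm 'I_n}) : i < k -> perm_orders pi (key (A i)) ->
  forall c, pi c < nth 0 a i -> hit (A i + pi c) c.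
Proof.
case: hitP => hit_total _ _ ltik piK c ltc.
have [c0 hitc0] := hit_total _ (segA_add_lt ltik ltc).
suff ec : c = c0 by rewrite [X in hit _ X]ec.
by apply: (@perm_inj _ pi); apply: val_inj; rewrite (key_position ltik piK ltc hitc0).
Qed.

Lemma perm_orders_key_tail i (pi pi' : {perm 'I_n}) : i < k ->
  perm_orders pi (key (A i)) -> perm_orders pi' (key (A i.+1)) ->
  forall c c', nth 0 a i <= pi c -> nth 0 a i <= pi c' -> (pi c < pi c') = (pi' c < pi' c').
Proof.
move=> ltik piK pi'K.
have key_tail c : nth 0 a i <= pi c -> key (A i) c = key (A i.+1) c.
  move=> lec; apply: key_skip => // m ltm; apply/negP=> hitc.
  by move: lec; rewrite (key_position ltik piK ltm hitc) leqNgt ltm.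
by move=> c c' lec lec'; rewrite piK pi'K !key_tail.
Qed.

Hypothesis final_pos_inj : injective final_pos.

Lemma key_inj b : injective (key b).
Proof.
case: hitP => _ hit_fun _ c c'; rewrite /key.
case: ifP => ltN; case: ifP => ltN' eqkey.
- by apply: hit_fun (first_hit ltN) _; rewrite eqkey; exact: (first_hit ltN').
- by move: ltN; rewrite eqkey ltnNge leq_addr.
- by move: ltN'; rewrite -eqkey ltnNge leq_addr.
- by apply: final_pos_inj; apply/eqP; rewrite -(eqn_add2l N) eqkey.
Qed.

End Hitting.

Section Shuffles.
Variables (n : nat) (a : seq nat).
Hypothesis a_le_n : forall x, x \in a -> x <= n.
Local Notation k := (size a).
Local Notation N := (sumn a).
Local Notation A := (segA a).
Implicit Types (u : {ffun 'I_k -> {perm 'I_n}}).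

Definition hits_nat u l c := hit_card a (tuple_seq u) l == Some c.

Lemma offset_lt_n l : l < N -> offset a l < n.
Proof.
move=> ltlN; apply: leq_trans (offset_lt ltlN) (nth_le_n a_le_n _).
by case: (seg_bounds ltlN).
Qed.

Lemma hits_natE u l c : l < N ->
  hits_nat u l c = (val ((deck_after (tuple_seq u) (seg a l))^-1 c)%g == offset a l).
Proof.
move=> ltlN; set d := deck_after _ _; set p := Ordinal (offset_lt_n ltlN).
rewrite /hits_nat (@hit_card_at _ _ _ _ p) //; apply/eqP/eqP => [[<-] | eoff].
  by rewrite permK.
by congr Some; rewrite -[c](permKV d); congr (d _); apply: val_inj.
Qed.

Lemma hitting_hits_nat u : hitting a (hits_nat u).
Proof.
split.
- move=> l ltlN; exists (deck_after (tuple_seq u) (seg a l) (Ordinal (offset_lt_n ltlN))).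
  by rewrite hits_natE // permK.
- by move=> l c c'; rewrite /hits_nat => /eqP-> /eqP[].
move=> l l' c ltlN ltl'N eseg; rewrite !hits_natE // eseg => /eqP eoff /eqP eoff'.
by apply: (seg_offset_inj ltlN ltl'N eseg); rewrite -eoff -eoff'.
Qed.

Variables (j : nat) (t : {perm 'I_n}).
Local Notation D := (Dset n a j t).

Definition tpos (c : 'I_n) : nat := (t^-1)%g c.

Lemma tpos_inj : injective tpos.
Proof. by move=> c c' /val_inj /perm_inj. Qed.

Local Notation key_of u := (key a tpos (hits_nat u)).

Lemma Dset_orders_key u i : u \in D -> i <= k ->
  perm_orders ((deck_after (tuple_seq u) i)^-1)%g (key_of u (A i)).
Proof.
rewrite inE => /and3P[/forallP uB _ /eqP ut] leik; rewrite -(subKn leik).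
elim: (k - i) (leq_subr i k) => [|m IHm] ltmk.
  by rewrite subn0 ut segA_size => c c'; rewrite !key_sumn ltn_add2l.
have ltik : k - m.+1 < k by lia.
have IH : perm_orders ((deck_after (tuple_seq u) (k - m.+1).+1)^-1)%g (key_of u (A (k - m.+1).+1)).
  by rewrite (_ : (k - m.+1).+1 = k - m); [apply: IHm; lia | lia].
apply: (perm_orders_key_pred a_le_n (hitting_hits_nat u) ltik IH) => [c ltc | c c' lec lec'].
  by rewrite hits_natE ?segA_add_lt // seg_add // offset_add // eqxx.
rewrite (deck_after_tuple_seqS u (Ordinal ltik)) invMg !permM.
by rewrite (isB_mono (uB (Ordinal ltik))).
Qed.

Hypothesis le_jn : j <= n.
Local Notation J := [set c : 'I_n | c < j].
Local Notation phi_j := (phi n a j).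

Lemma Dset_alpha_neq0 u (c : 'I_n) : u \in D -> (alpha u c != set0) = (c < j).
Proof.
rewrite inE => /and3P[_ /eqP eq_hit _].
have : c \in cards_hit u = (c \in J) by rewrite eq_hit.
rewrite !inE => <-; apply/set0Pn/existsP => -[l]; rewrite ?inE => hitc; by exists l; rewrite ?inE.
Qed.

Lemma Dset_alpha_inj u : u \in D -> {in J &, injective (alpha u)}.
Proof.
move=> uD c c'; rewrite inE -(Dset_alpha_neq0 _ uD) => /set0Pn[l lc] _ ealpha.
have [_ hit_fun _] := hitting_hits_nat u.
by move: lc (lc); rewrite {2}ealpha !inE; apply: hit_fun.
Qed.

Lemma phi_partition u : u \in D -> partition (phi_j u) [set: 'I_N] /\ #|phi_j u| = j.
Proof.
move=> uD; have [hit_total hit_fun _] := hitting_hits_nat u.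
rewrite -[X in _ = X](card_ltn_ord le_jn); apply: partitionT_imset.
- by move=> c; rewrite inE Dset_alpha_neq0.
- move=> c c' _ _ neqc; rewrite -setI_eq0; apply/eqP/setP=> l; rewrite !inE.
  by apply/andP=> -[hitc hitc']; move: neqc; rewrite (hit_fun _ _ _ hitc hitc') eqxx.
move=> l; have [c hitc] := hit_total l (ltn_ord l).
by exists c; rewrite ?inE // -(Dset_alpha_neq0 _ uD); apply/set0Pn; exists l; rewrite inE.
Qed.

Lemma phi_in_Qset u : u \in D -> phi_j u \in Qset a j.
Proof.
move=> uD; have [part card] := phi_partition uD; have [_ _ hit_seg] := hitting_hits_nat u.
rewrite inE part card eqxx; apply/forall_inP=> _ /imsetP[c _ ->].
apply/forall_inP=> l; rewrite inE => hitl; apply/forall_inP=> l'; rewrite inE => hitl'.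
by apply/implyP=> /eqP eseg; apply/eqP/val_inj; apply: hit_seg hitl hitl'.
Qed.

Lemma Dset_least_alpha_mono u (c c' : 'I_n) : u \in D -> c < j -> c' < j ->
  (c < c') = (least (alpha u c) < least (alpha u c')).
Proof.
move=> uD ltcj ltc'j; rewrite -!(@key0_least _ _ tpos (hits_nat u)) ?Dset_alpha_neq0 // -(segA0 a).
by have := Dset_orders_key uD (leq0n k) c c'; rewrite deck_after0 invg1 !perm1.
Qed.

Lemma Dset_rank_alpha u (c : 'I_n) : u \in D -> c < j -> rank_in (phi_j u) least (alpha u c) = c.
Proof.
move=> uD ltcj; rewrite /rank_in.
have -> : [set B in phi_j u | least B < least (alpha u c)] = alpha u @: [set c' : 'I_n | c' < c].
  apply/setP=> B; rewrite inE; apply/andP/imsetP => [[/imsetP[c' c'J ->]] | [c' ltc' ->]].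
    by rewrite inE in c'J; rewrite -Dset_least_alpha_mono // => ltc'; exists c'; rewrite ?inE.
  rewrite inE in ltc'; have ltc'j := ltn_trans ltc' ltcj.
  by rewrite -Dset_least_alpha_mono // ltc' imset_f ?inE.
rewrite card_in_imset ?card_ltn_ord ?(leq_trans (ltnW ltcj)) // => c1 c2.
by rewrite !inE => ltc1 ltc2; apply: (Dset_alpha_inj uD); rewrite inE (ltn_trans _ ltcj).
Qed.

Lemma Dset_alpha_block u (c : 'I_n) : u \in D -> alpha u c = block (phi_j u) c.
Proof.
move=> uD; have [part card] := phi_partition uD.
case: (ltnP c j) => [ltcj | lejc].
  by rewrite -(Dset_rank_alpha uD ltcj) (block_rank part) ?imset_f ?inE.
rewrite block_out ?card //; apply/eqP; apply: contraTT lejc.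
by rewrite Dset_alpha_neq0 // -ltnNge.
Qed.

Lemma deck_after_tuple_seq_inj u u' :
  (forall i, i <= k -> deck_after (tuple_seq u) i = deck_after (tuple_seq u') i) -> u = u'.
Proof.
move=> edeck; apply/ffunP=> i; apply: (mulIg (deck_after (tuple_seq u) i)).
rewrite -deck_after_tuple_seqS (edeck i) ?(ltnW (ltn_ord i)) //.
by rewrite -deck_after_tuple_seqS edeck.
Qed.

Lemma phi_inj : {in D &, injective phi_j}.
Proof.
move=> u u' uD u'D ephi; apply: deck_after_tuple_seq_inj => i leik.
have ehit l c : l < N -> hits_nat u l c = hits_nat u' l c.
  move=> ltlN; have ealpha : alpha u c = alpha u' c by rewrite !Dset_alpha_block // ephi.
  by move/setP/(_ (Ordinal ltlN)): ealpha; rewrite !inE.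
have ekey : key_of u (A i) =1 key_of u' (A i).
  by move=> c; rewrite /key (@first_ext _ _ ((hits_nat u')^~ c)) // => l /andP[_ /ehit].
apply: invg_inj; apply: perm_orders_uniq (Dset_orders_key uD leik) _ => c c'.
by rewrite (Dset_orders_key u'D leik) !ekey.
Qed.

Section Surjection.
Variable P : {set {set 'I_N}}.
Hypothesis PQ : P \in Qset a j.
Hypothesis tB : isB j t.

Lemma Qset_partition : partition P [set: 'I_N].
Proof. by move: PQ; rewrite inE => /and3P[]. Qed.

Lemma Qset_card : #|P| = j.
Proof. by move: PQ; rewrite inE => /and3P[_ /eqP]. Qed.

Lemma Qset_seg B x y : B \in P -> x \in B -> y \in B -> seg a x = seg a y -> x = y.
Proof.
move: PQ; rewrite inE => /and3P[_ _ /forall_inP segP] BP xB yB eseg.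
by have /forall_inP/(_ x xB)/forall_inP/(_ y yB) := segP B BP; rewrite eseg eqxx => /eqP.
Qed.

Local Notation block_of c := (block P (nat_of_ord c)).

Lemma block_of_mem (c : 'I_n) : c < j -> block_of c \in P /\ rank_in P least (block_of c) = c.
Proof. by rewrite -Qset_card; apply: (block_mem Qset_partition). Qed.

Lemma block_of_onto B : B \in P -> exists2 c : 'I_n, c < j & block_of c = B.
Proof.
move=> BP; have ltB : rank_in P least B < j by rewrite -Qset_card rank_in_lt.
by exists (Ordinal (leq_trans ltB le_jn)); rewrite //= (block_rank Qset_partition).
Qed.

Definition hit_block l (c : 'I_n) := [exists x in block_of c, val x == l].

Lemma hit_blockE (c : 'I_n) : [set l : 'I_N | hit_block l c] = block_of c.
Proof.
apply/setP=> l; rewrite inE; apply/existsP/idP => [[x /andP[xB /eqP/val_inj <-]] // | lB].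
by exists l; rewrite lB eqxx.
Qed.

Lemma hit_block_lt l (c : 'I_n) : hit_block l c -> c < j.
Proof.
case/existsP=> x /andP[xB _]; rewrite ltnNge; apply/negP=> lejc.
by move: xB; rewrite block_out ?inE // Qset_card.
Qed.

Lemma hitting_hit_block : hitting a hit_block.
Proof.
split.
- move=> l ltlN; have : Ordinal ltlN \in cover P by rewrite (cover_partition Qset_partition) inE.
  case/bigcupP=> B BP lB; have [c _ eB] := block_of_onto BP.
  by exists c; apply/existsP; exists (Ordinal ltlN); rewrite eB lB eqxx.
- move=> l c c' hitc hitc'.
  have [cP rank_c] := block_of_mem (hit_block_lt hitc).
  have [c'P rank_c'] := block_of_mem (hit_block_lt hitc').
  move: hitc hitc' => /existsP[x /andP[xB /eqP ex]] /existsP[x' /andP[x'B /eqP ex']].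
  have exx' : x = x' by apply: val_inj; rewrite ex ex'.
  have trivP := partition_trivIset Qset_partition.
  apply: val_inj; rewrite /= -rank_c -rank_c'.
  by rewrite -(def_pblock trivP cP xB) -(def_pblock trivP c'P x'B) exx'.
move=> l l' c _ _ eseg hitc hitc'; have [cP _] := block_of_mem (hit_block_lt hitc).
move: hitc hitc' eseg => /existsP[x /andP[xB /eqP <-]] /existsP[x' /andP[x'B /eqP <-]] eseg.
by rewrite (Qset_seg cP xB x'B eseg).
Qed.

Local Notation key_block := (key a tpos hit_block).

Lemma key_block0_in (c : 'I_n) : c < j -> key_block 0 c = least (block_of c).
Proof.
move=> ltcj; have [cP _] := block_of_mem ltcj.
by rewrite key0_least hit_blockE // (partition_neq0 Qset_partition cP).
Qed.

Lemma key_block0_out (c : 'I_n) : j <= c -> key_block 0 c = N + tpos c.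
Proof.
move=> lejc; apply: key_nohit => // l _; apply: contraL lejc => /hit_block_lt.
by rewrite -ltnNge.
Qed.

Lemma key_block0_lt (c : 'I_n) : c < j -> key_block 0 c < N.
Proof.
move=> ltcj; have [cP _] := block_of_mem ltcj; rewrite key_block0_in //.
have [x _ <-] := least_mem (partition_neq0 Qset_partition cP); exact: ltn_ord.
Qed.

Lemma perm_orders_key_block0 : perm_orders 1%g (key_block (A 0)).
Proof.
move=> c c'; rewrite !perm1 segA0.
case: (ltnP c j) => ltcj; case: (ltnP c' j) => ltc'j.
- have [cP rank_c] := block_of_mem ltcj; have [c'P rank_c'] := block_of_mem ltc'j.
  by rewrite !key_block0_in // -(ltn_rank_in least cP c'P) rank_c rank_c'.
- rewrite (leq_trans ltcj ltc'j) (key_block0_out ltc'j).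
  by rewrite (leq_trans (key_block0_lt ltcj) (leq_addr _ _)).
- rewrite ltnNge (ltnW (leq_trans ltc'j ltcj)) (key_block0_out ltcj) ltnNge.
  by rewrite (leq_trans (ltnW (key_block0_lt ltc'j)) (leq_addr _ _)).
- by rewrite !key_block0_out // ltn_add2l /tpos (isB_mono tB).
Qed.

Lemma key_block_inj b : injective (key_block b).
Proof. exact: key_inj hitting_hit_block tpos_inj b. Qed.

Definition deck_pos i : {perm 'I_n} := sval (perm_orders_exists (@key_block_inj (A i))).

Lemma deck_pos_orders i : perm_orders (deck_pos i) (key_block (A i)).
Proof. exact: svalP (perm_orders_exists (@key_block_inj (A i))). Qed.

Lemma deck_pos0 : deck_pos 0 = 1%g.
Proof. exact: perm_orders_uniq (deck_pos_orders 0) perm_orders_key_block0. Qed.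

Lemma deck_pos_size : deck_pos k = (t^-1)%g.
Proof.
apply: perm_orders_uniq (deck_pos_orders k) _ => c c'.
by rewrite segA_size !key_sumn ltn_add2l.
Qed.

Definition shuffles_of_blocks : {ffun 'I_k -> {perm 'I_n}} :=
  [ffun i : 'I_k => ((deck_pos i.+1)^-1 * deck_pos i)%g].

Local Notation u := shuffles_of_blocks.

Lemma deck_after_shuffles_of_blocks i : i <= k -> deck_after (tuple_seq u) i = ((deck_pos i)^-1)%g.
Proof.
elim: i => [|i IHi] leik; first by rewrite deck_after0 deck_pos0 invg1.
by rewrite (deck_after_tuple_seqS u (Ordinal leik)) IHi ?ffunE ?mulgK // ltnW.
Qed.

Lemma shuffles_of_blocks_isB (i : 'I_k) : isB (nth 0 a i) (u i).
Proof.
apply/forallP=> x; apply/forallP=> y; apply/implyP=> /andP[lex ltxy].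
rewrite ffunE invMg invgK !permM.
by rewrite -(perm_orders_key_tail a_le_n hitting_hit_block (ltn_ord i) (deck_pos_orders i)
  (deck_pos_orders i.+1)) ?permKV // (leq_trans lex (ltnW ltxy)).
Qed.

Lemma hits_shuffles_of_blocks l c : l < N -> hits_nat u l c = hit_block l c.
Proof.
move=> ltlN; have [ltk /andP[lel ltl]] := seg_bounds ltlN.
have ltoff : offset a l < nth 0 a (seg a l) := offset_lt ltlN.
have el : l = A (seg a l) + offset a l by rewrite subnKC.
rewrite hits_natE // deck_after_shuffles_of_blocks ?invgK ?(ltnW ltk) //.
apply/eqP/idP => [eoff | hitc].
  rewrite el -eoff; apply: (perm_orders_key_hit a_le_n hitting_hit_block ltk (deck_pos_orders _)).
  by rewrite eoff.
apply: (key_position a_le_n hitting_hit_block ltk (deck_pos_orders _) ltoff).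
by rewrite -el.
Qed.

Lemma alpha_shuffles_of_blocks (c : 'I_n) : alpha u c = block_of c.
Proof.
by rewrite -hit_blockE; apply/setP=> l; rewrite !inE -hits_shuffles_of_blocks.
Qed.

Lemma shuffles_of_blocks_in_Dset : u \in D.
Proof.
rewrite inE; apply/and3P; split.
- by apply/forallP=> i; apply: shuffles_of_blocks_isB.
- apply/eqP/setP=> c; rewrite !inE; apply/existsP/idP => [[l] | ltcj].
    by rewrite -[hits u l c]/(hits_nat u l c) hits_shuffles_of_blocks //; apply: hit_block_lt.
  have [cP _] := block_of_mem ltcj.
  have /set0Pn[l] := partition_neq0 Qset_partition cP.
  by rewrite -alpha_shuffles_of_blocks inE; exists l.
- by rewrite deck_after_shuffles_of_blocks // deck_pos_size invgK.
Qed.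

Lemma phi_shuffles_of_blocks : phi_j u = P.
Proof.
apply/setP=> B; apply/imsetP/idP => [[c] | BP].
  by rewrite inE alpha_shuffles_of_blocks => /block_of_mem[BP _] ->.
by have [c ltcj <-] := block_of_onto BP; exists c; rewrite ?inE ?alpha_shuffles_of_blocks.
Qed.

End Surjection.

End Shuffles.

Theorem theorem3p2 (n : nat) (a : seq nat)
  (ha : forall x, x \in a -> 1 <= x <= n)
  (j : nat) (hj1 : \max_(x <- a) x <= j) (hj2 : j <= minn (sumn a) n)
  (t : {perm 'I_n}) (ht : isB j t) :
  {in Dset n a j t, forall s, phi n a j s \in Qset a j} /\
  {in Dset n a j t &, injective (phi n a j)} /\
  (forall P, P \in Qset a j -> exists2 s, s \in Dset n a j t & phi n a j s = P).
Proof.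
have a_le_n x : x \in a -> x <= n by case/ha/andP.
have le_jn : j <= n by move: hj2; rewrite leq_min => /andP[].
split; first by move=> u; apply: phi_in_Qset.
split; first exact: phi_inj.
move=> P PQ; exists (shuffles_of_blocks t le_jn PQ).
  exact: shuffles_of_blocks_in_Dset.
exact: phi_shuffles_of_blocks.
Qed.
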